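(* The set $\{\gamma(w): w \text{ a nanoword over }\alpha\}$ is equal to the commutator subgroup $[\Pi,\Pi]$ of $\Pi$.
   Context: Fix a set $\alpha$ with an involution $\tau$. A nanoword over $\alpha$ is a pair $(\mathcal A,w)$ with $\mathcal A$ a finite set with a map $A\mapsto|A|\in\alpha$ and $w:\{1,\dots,n\}\to\mathcal A$ a word in which each letter of $\mathcal A$ occurs exactly twice. Let $\Pi$ be the group with generators $\{z_a\}_{a\in\alpha}$ and defining relations $z_az_{\tau(a)}=1$ for $a\in\alpha$. For a nanoword $(\mathcal A,w)$ of length $n$ and $i=1,\dots,n$ set $\gamma_i=z_{|w(i)|}$ if position $i$ is the first occurrence of the letter $w(i)$ in $w$, and $\gamma_i=z_{\tau(|w(i)|)}=z_{|w(i)|}^{-1}$ otherwise; put $\gamma(w)=\gamma_1\cdots\gamma_n\in\Pi$ (with $\gamma$ of the empty nanoword equal to $1$). *)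

From mathcomp Require Import all_boot.
Set Implicit Arguments. Unset Strict Implicit. Unset Printing Implicit Defensive.

(* The group Pi = < z_a (a in alpha) | z_a z_(tau a) = 1 > is modelled as the
   free monoid on alpha (words [seq alpha]) modulo the congruence generated by
   the relations  [:: a; tau a] = [::]  (for tau an involution this monoid
   quotient is the group with the given presentation; the inverse of a word w
   is [rev (map tau w)]). The letter a stands for the generator z_a. *)

Section Pi.
Variables (alpha : Type) (tau : alpha -> alpha).

Inductive pi_step : seq alpha -> seq alpha -> Prop :=
| PiStep (u v : seq alpha) (a : alpha) : pi_step (u ++ [:: a; tau a] ++ v) (u ++ v).

Inductive pi_eq : seq alpha -> seq alpha -> Prop :=
| PiRefl u : pi_eq u u
| PiStepE u v : pi_step u v -> pi_eq u v
| PiSym u v : pi_eq u v -> pi_eq v u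
| PiTrans u v w : pi_eq u v -> pi_eq v w -> pi_eq u w.

Definition pi_inv (w : seq alpha) : seq alpha := rev (map tau w).

Definition pi_comm (x y : seq alpha) : seq alpha :=
  pi_inv x ++ pi_inv y ++ x ++ y.

Inductive in_commutator_subgroup : seq alpha -> Prop :=
| CS_comm x y : in_commutator_subgroup (pi_comm x y)
| CS_one : in_commutator_subgroup [::]
| CS_mul u v : in_commutator_subgroup u -> in_commutator_subgroup v ->
               in_commutator_subgroup (u ++ v)
| CS_inv u : in_commutator_subgroup u -> in_commutator_subgroup (pi_inv u)
| CS_eq u v : pi_eq u v -> in_commutator_subgroup u -> in_commutator_subgroup v.

End Pi.

(* Nanowords: a finite alphabet A (a finType) with a projection lab : A -> alpha
   and a word w : seq A in which each letter of A occurs exactly twice. *)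
Definition is_nanoword (A : finType) (w : seq A) : Prop :=
  forall x : A, count_mem x w = 2.

(* gamma(w) as a word over alpha: the i-th letter is |w(i)| at a first
   occurrence and tau |w(i)| at a second occurrence; [seen] records letters
   already read. *)
Fixpoint gamma_aux (A : eqType) (alpha : Type) (lab : A -> alpha)
    (tau : alpha -> alpha) (seen : seq A) (w : seq A) : seq alpha :=
  match w with
  | [::] => [::]
  | x :: w' => (if x \in seen then tau (lab x) else lab x)
                 :: gamma_aux lab tau (x :: seen) w'
  end.

Definition gamma (A : eqType) (alpha : Type) (lab : A -> alpha)
    (tau : alpha -> alpha) (w : seq A) : seq alpha :=
  gamma_aux lab tau [::] w.

From mathcomp Require Import all_boot.

Set Implicit Arguments.
Unset Strict Implicit.
Unset Printing Implicit Defensive.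

(* Write w = x w1 x w2 and let a be the label of x.  Then
   gamma(w) = a gamma(w1) a^-1 v with gamma(w1) v = gamma(w1 w2), and
   a g a^-1 v = [a^-1, g^-1] g v, so induction on the length puts gamma(w) in
   [Pi, Pi].  Conversely, every element of [Pi, Pi] is a product of commutators.
   Labelling each position of y x by the inverse of its letter, the nanoword
   rev(e) rot_|y|(e) over the list e of positions has gamma (y x)^-1 (x y) = [x, y];
   a product is realised by juxtaposing nanowords over disjoint alphabets. *)

Section WordGroup.
Variables (alpha : Type) (tau : alpha -> alpha).
Hypothesis tauK : involutive tau.

Lemma pi_step_ctx p q u v :
  pi_step tau u v -> pi_step tau (p ++ u ++ q) (p ++ v ++ q).
Proof.
case=> u0 v0 a; have := PiStep tau (p ++ u0) (v0 ++ q) a.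
by rewrite -!catA.
Qed.

Lemma pi_eq_ctx p q u v :
  pi_eq tau u v -> pi_eq tau (p ++ u ++ q) (p ++ v ++ q).
Proof.
elim=> [u0 | u0 v0 /(pi_step_ctx p q) | u0 v0 _ | u0 v0 w0 _ IH1 _ IH2].
- exact: PiRefl.
- exact: PiStepE.
- exact: PiSym.
- exact: PiTrans IH1 IH2.
Qed.

Lemma pi_eq_cat u u' v v' :
  pi_eq tau u u' -> pi_eq tau v v' -> pi_eq tau (u ++ v) (u' ++ v').
Proof.
move=> /(pi_eq_ctx [::] v) eq_u /(pi_eq_ctx u' [::]); rewrite !cats0.
exact: PiTrans.
Qed.

Lemma pi_inv_cat u v : pi_inv tau (u ++ v) = pi_inv tau v ++ pi_inv tau u.
Proof. by rewrite /pi_inv map_cat rev_cat. Qed.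

Lemma pi_invK : involutive (pi_inv tau).
Proof. by move=> u; rewrite /pi_inv map_rev revK -map_comp (eq_map tauK) map_id. Qed.

Lemma pi_eq_inv u v : pi_eq tau u v -> pi_eq tau (pi_inv tau u) (pi_inv tau v).
Proof.
elim=> [u0 | {}u {}v [u0 v0 a] | u0 v0 _ | u0 v0 w0 _ IH1 _ IH2].
- exact: PiRefl.
- apply: PiStepE; rewrite !pi_inv_cat /pi_inv /= tauK -catA.
  exact: (PiStep tau _ _ a).
- exact: PiSym.
- exact: PiTrans IH1 IH2.
Qed.

Lemma pi_invKl u : pi_eq tau (pi_inv tau u ++ u) [::].
Proof.
elim: u => [|a u IH]; first exact: PiRefl.
apply: PiTrans IH; apply: PiStepE.
have := PiStep tau (pi_inv tau u) u (tau a).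
by rewrite tauK /pi_inv /= rev_cons -cats1 -catA.
Qed.

Lemma pi_inv_comm x y : pi_inv tau (pi_comm tau x y) = pi_comm tau y x.
Proof. by rewrite /pi_comm !pi_inv_cat !pi_invK !catA. Qed.

Lemma commutator_subgroup_conj x u v :
  in_commutator_subgroup tau (u ++ v) ->
  in_commutator_subgroup tau (x ++ u ++ pi_inv tau x ++ v).
Proof.
move=> cs_uv; apply: CS_eq (CS_mul (CS_comm tau (pi_inv tau x) (pi_inv tau u)) cs_uv).
have := pi_eq_ctx (x ++ u ++ pi_inv tau x) v (pi_invKl u).
by rewrite /pi_comm !pi_invK -!catA.
Qed.

Definition comm_prod (l : seq (seq alpha * seq alpha)) : seq alpha :=
  flatten [seq pi_comm tau p.1 p.2 | p <- l].

Lemma pi_inv_comm_prod l :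
  pi_inv tau (comm_prod l) = comm_prod (rev [seq (p.2, p.1) | p <- l]).
Proof.
elim: l => [|p l IH] //=.
by rewrite pi_inv_cat IH pi_inv_comm rev_cons /comm_prod map_rcons flatten_rcons.
Qed.

Lemma commutator_subgroup_comm_prod g :
  in_commutator_subgroup tau g -> exists l, pi_eq tau (comm_prod l) g.
Proof.
elim=> [x y | | u v _ [l1 eq1] _ [l2 eq2] | u _ [l eq_l] | u v eq_uv _ [l eq_l]].
- by exists [:: (x, y)]; rewrite /comm_prod /= cats0; apply: PiRefl.
- by exists [::]; apply: PiRefl.
- by exists (l1 ++ l2); rewrite /comm_prod map_cat flatten_cat; apply: pi_eq_cat.
- by exists (rev [seq (p.2, p.1) | p <- l]); rewrite -pi_inv_comm_prod; apply: pi_eq_inv.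
- by exists l; apply: PiTrans eq_uv.
Qed.

Section Gamma.
Variables (A : eqType) (lab : A -> alpha).

Lemma gamma_aux_cat s u v :
  gamma_aux lab tau s (u ++ v) =
  gamma_aux lab tau s u ++ gamma_aux lab tau (rev u ++ s) v.
Proof. by elim: u s => [|x u IH] s //=; rewrite IH rev_cons cat_rcons. Qed.

Lemma eq_gamma_aux s s' w : {in w, s =i s'} ->
  gamma_aux lab tau s w = gamma_aux lab tau s' w.
Proof.
elim: w s s' => [|x w IH] s s' //= eq_s.
rewrite eq_s ?mem_head //; congr (_ :: _); apply: IH => y w_y.
by rewrite !in_cons eq_s // in_cons w_y orbT.
Qed.

Lemma gamma_aux_seen s w : {subset w <= s} ->
  gamma_aux lab tau s w = [seq tau (lab x) | x <- w].
Proof.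
elim: w s => [|x w IH] s //= w_s.
rewrite w_s ?mem_head //; congr (_ :: _); apply: IH => y w_y.
by rewrite in_cons w_s ?in_cons ?w_y ?orbT.
Qed.

Lemma gamma_aux_fresh s w : uniq w -> {in w, forall x, x \notin s} ->
  gamma_aux lab tau s w = map lab w.
Proof.
elim: w s => [|x w IH] s //= /andP [x_w uniq_w] w_s.
rewrite (negbTE (w_s x (mem_head x w))); congr (_ :: _); apply: IH => // y w_y.
by rewrite in_cons negb_or w_s ?in_cons ?w_y ?orbT // andbT; apply: contraNneq x_w => <-.
Qed.

Lemma gamma_uniq_cat u v : uniq u -> {subset v <= u} ->
  gamma lab tau (u ++ v) = map lab u ++ [seq tau (lab x) | x <- v].
Proof.
move=> uniq_u v_u; rewrite /gamma gamma_aux_cat gamma_aux_fresh // gamma_aux_seen //.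
by move=> x /v_u; rewrite cats0 mem_rev.
Qed.

Lemma gamma_split_first x w1 w2 : x \notin w1 -> x \notin w2 ->
  gamma lab tau (x :: w1 ++ x :: w2) =
  [:: lab x] ++ gamma lab tau w1 ++ [:: tau (lab x)] ++
  gamma_aux lab tau (rev w1) w2.
Proof.
move=> x_w1 x_w2; rewrite /gamma /= gamma_aux_cat /= mem_cat mem_rev mem_head orbT.
congr (_ :: _ ++ _ :: _).
  by apply: eq_gamma_aux => y w1_y; rewrite !inE; case: eqP w1_y x_w1 => // ->->.
apply: eq_gamma_aux => y w2_y; rewrite !(mem_cat, inE, mem_rev).
by case: eqP w2_y x_w2 => [->->|] //; rewrite orbF.
Qed.

Lemma split_twice (x : A) (w : seq A) : count_mem x (x :: w) = 2 ->
  exists w1 w2, [/\ w = w1 ++ x :: w2, x \notin w1 & x \notin w2].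
Proof.
rewrite /= eqxx add1n => -[count_x].
have w_x: x \in w by rewrite -has_pred1 has_count count_x.
move: count_x; case/splitPr: w_x => w1 w2; rewrite count_cat /= eqxx add1n addnS => -[].
move/eqP; rewrite addn_eq0 => /andP [/eqP c1 /eqP c2].
by exists w1, w2; rewrite -!has_pred1 !has_count c1 c2.
Qed.

Lemma gamma_in_commutator_subgroup w :
  {in w, forall x, count_mem x w = 2} ->
  in_commutator_subgroup tau (gamma lab tau w).
Proof.
elim: {w}_.+1 {-2}w (ltnSn (size w)) => // n IHn [_ _ | x w]; first exact: CS_one.
rewrite ltnS => size_w twice.
have [w1 [w2 [def_w x_w1 x_w2]]] := split_twice (twice x (mem_head x w)); subst w.
rewrite gamma_split_first //; apply: commutator_subgroup_conj.
have -> : gamma lab tau w1 ++ gamma_aux lab tau (rev w1) w2 = gamma lab tau (w1 ++ w2).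
  by rewrite /gamma gamma_aux_cat cats0.
apply: IHn => [|y w12_y].
  by move: size_w; rewrite /= !size_cat /= addnS; apply: ltnW.
have x_y : (x == y) = false.
  by apply: contraTF w12_y => /eqP <-; rewrite mem_cat negb_or x_w1.
have y_w : y \in x :: w1 ++ x :: w2.
  by move: w12_y; rewrite !(inE, mem_cat) => /orP [] ->; rewrite ?orbT.
by have := twice y y_w; rewrite /= !count_cat /= x_y !add0n.
Qed.

End Gamma.

Lemma is_nanoword_perm (T : finType) (u v : seq T) :
  uniq u -> (forall z, z \in u) -> perm_eq u v -> is_nanoword (u ++ v).
Proof.
move=> uniq_u u_full /permP eq_uv z.
by rewrite count_cat -eq_uv count_uniq_mem ?u_full.
Qed.

Lemma pi_comm_gamma x y : exists (A : finType) (lab : A -> alpha) (w : seq A),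
  is_nanoword w /\ gamma lab tau w = pi_comm tau x y.
Proof.
pose t := in_tuple (y ++ x).
have e_full i : i \in rev (enum 'I_(size (y ++ x))) by rewrite mem_rev mem_enum.
exists 'I_(size (y ++ x)), (tau \o tnth t).
exists (rev (enum 'I_(size (y ++ x))) ++ rot (size y) (enum 'I_(size (y ++ x)))); split.
  apply: is_nanoword_perm; rewrite ?rev_uniq ?enum_uniq //.
  by rewrite perm_rev perm_sym perm_rot.
rewrite gamma_uniq_cat ?rev_uniq ?enum_uniq //.
rewrite map_rev map_rot (eq_map (fun i => tauK (tnth t i))) map_comp !map_tnth_enum.
by rewrite rot_size_cat /pi_comm [in RHS]catA -pi_inv_cat.
Qed.

Lemma gamma_aux_map_inj (A B : eqType) (f : A -> B) (lab : B -> alpha) s w :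
  injective f ->
  gamma_aux lab tau (map f s) (map f w) = gamma_aux (lab \o f) tau s w.
Proof. by move=> inj_f; elim: w s => [|x w IH] s //=; rewrite mem_map // -IH. Qed.

Definition sum_lab (A B : Type) (la : A -> alpha) (lb : B -> alpha) (z : A + B) :=
  match z with inl a => la a | inr b => lb b end.

Lemma gamma_sum (A B : eqType) (la : A -> alpha) (lb : B -> alpha) u v :
  gamma (sum_lab la lb) tau (map inl u ++ map inr v) =
  gamma la tau u ++ gamma lb tau v.
Proof.
rewrite /gamma gamma_aux_cat (gamma_aux_map_inj _ [::]); last by move=> ? ? [].
rewrite (@eq_gamma_aux _ _ _ (map inr [::])) ?gamma_aux_map_inj //; first by move=> ? ? [].
by move=> _ /mapP [b _ ->]; rewrite cats0 mem_rev; apply/mapP => -[].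
Qed.

Lemma count_mem_map_inj (T U : eqType) (f : T -> U) (s : seq T) x :
  injective f -> count_mem (f x) (map f s) = count_mem x s.
Proof. by move=> inj_f; rewrite count_map; apply: eq_count => y /=; apply: inj_eq. Qed.

Lemma is_nanoword_sum (A B : finType) (u : seq A) (v : seq B) :
  is_nanoword u -> is_nanoword v -> is_nanoword (map inl u ++ map inr v).
Proof.
move=> nano_u nano_v [a | b]; rewrite count_cat.
  have /count_memPn -> : inl a \notin map (@inr A B) v by apply/mapP => -[].
  by rewrite count_mem_map_inj ?addn0 //; move=> ? ? [].
have /count_memPn -> : inr b \notin map (@inl A B) u by apply/mapP => -[].
by rewrite count_mem_map_inj ?add0n //; move=> ? ? [].
Qed.

Lemma comm_prod_gamma l : exists (A : finType) (lab : A -> alpha) (w : seq A),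
  is_nanoword w /\ gamma lab tau w = comm_prod l.
Proof.
elim: l => [|[x y] l [B [lb [v [nano_v gamma_v]]]]].
  by exists void, (@of_void alpha), [::]; split => // -[].
have [A [la [u [nano_u gamma_u]]]] := pi_comm_gamma x y.
exists (A + B)%type, (sum_lab la lb), (map inl u ++ map inr v); split.
  exact: is_nanoword_sum.
by rewrite gamma_sum gamma_u gamma_v.
Qed.

End WordGroup.

Theorem lemma4p1 (alpha : Type) (tau : alpha -> alpha)
    (tau_inv : forall a, tau (tau a) = a) (g : seq alpha) :
  (exists (A : finType) (lab : A -> alpha) (w : seq A),
      is_nanoword w /\ pi_eq tau (gamma lab tau w) g)
  <-> in_commutator_subgroup tau g.
Proof.
split=> [[A [lab [w [nano_w eq_g]]]] | /(commutator_subgroup_comm_prod tau_inv)].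
  by apply: CS_eq eq_g (gamma_in_commutator_subgroup tau_inv _ (fun x _ => nano_w x)).
move=> [l eq_l]; have [A [lab [w [nano_w gamma_w]]]] := comm_prod_gamma tau_inv l.
by exists A, lab, w; rewrite gamma_w.
Qed.
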